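(* Let $\Gamma$ be a $d\times k$ categorical random matrix and $\mathbf U=(U_1,\dots,U_k)^\top$ a vector of iid standard uniform random variables independent of $\Gamma$. Then $\mathbf X=\Gamma\mathbf U$ has positive regression dependence (PRD).
   Context: A $d\times k$ categorical random matrix is a random matrix with entries in $\{0,1\}$ each of whose rows sums to $1$. A set $A\subseteq\mathbb R^d$ is increasing if $\mathbf x\in A$ and $\mathbf y\ge\mathbf x$ (componentwise) imply $\mathbf y\in A$. $\mathbf X=(X_1,\dots,X_d)$ has PRD if for every $i\in[d]$ and every increasing set $A\subseteq\mathbb R^d$, the function $x\mapsto\mathbb P(\mathbf X\in A\mid X_i=x)$ is increasing. *)

From HB Require Import structures.
From mathcomp Require Import all_boot all_order all_algebra.
From mathcomp Require Import all_classical all_reals all_analysis.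
Set Implicit Arguments. Unset Strict Implicit. Unset Printing Implicit Defensive.
Import Order.TTheory GRing.Theory Num.Theory.
Local Open Scope classical_set_scope.
Local Open Scope ring_scope.

Section defs.
Context (R : realType).

(* Borel sigma-algebra on R^d (= 'cV[R]_d): generated by the coordinate
   cylinders {x | x_i in B}, B Borel in R (product sigma-algebra). *)
Definition coord_cylinders (d : nat) : set (set 'cV[R]_d) :=
  [set S | exists (i : 'I_d) (B : set R),
      measurable B /\ S = (fun x : 'cV[R]_d => x i ord0) @^-1` B].

Definition borel_cV (d : nat) (A : set 'cV[R]_d) : Prop :=
  <<s @coord_cylinders d >> A.

Definition increasing_set (d : nat) (A : set 'cV[R]_d) : Prop :=
  forall x y : 'cV[R]_d, A x -> (forall i, x i ord0 <= y i ord0) -> A y.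

Definition categorical_matrix (d k : nat) (M : 'M[R]_(d, k)) : Prop :=
  (forall i j, M i j = 0 \/ M i j = 1) /\ (forall i, \sum_j M i j = 1).

(* P(X in A | X_i = x) is understood as a version g of the conditional
   probability given X_i, i.e. a measurable g with
   P(X in A, X_i in B) = E[ g(X_i) ; X_i in B ] for all Borel B;
   "x |-> P(X in A | X_i = x) is increasing" = some version is nondecreasing. *)
Definition PRD (dT : measure_display) (T : measurableType dT)
    (P : probability T R) (d : nat) (X : T -> 'cV[R]_d) : Prop :=
  forall (i : 'I_d) (A : set 'cV[R]_d), borel_cV A -> increasing_set A ->
    exists g : R -> R,
      [/\ {homo g : x y / x <= y}, measurable_fun setT g &
        forall B : set R, measurable B ->
          P (X @^-1` A `&` (fun t => X t i ord0) @^-1` B)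
          = (\int[P]_(t in (fun t => X t i ord0) @^-1` B) (g (X t i ord0))%:E)%E].

End defs.

From HB Require Import structures.
From mathcomp Require Import all_boot all_order all_algebra.
From mathcomp Require Import all_classical all_reals all_analysis.
From mathcomp Require Import measurable_realfun lra.
Import Order.TTheory GRing.Theory Num.Theory.
Local Open Scope classical_set_scope.
Local Open Scope ring_scope.

(* A categorical matrix is [select_mx f] for the map [f : 'I_d -> 'I_k] locating
   the 1 of each row, so on the event [Gamma = select_mx f] we have
   [X = (U (f r))_r] and [X_i = U (f i)]. Since [U] is independent of [Gamma]
   and has independent uniform coordinates, given [Gamma = select_mx f] and
   [X_i = x] the vector [X] is distributed as [select_mx f *m U] with [U (f i)]
   replaced by [x], and the probability that this lies in an increasing set
   grows with [x]. As [X_i] is uniform and independent of [Gamma], averaging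
   over [f] with weights [P (Gamma = select_mx f)] yields a nondecreasing
   version of [P (X \in A | X_i = x)]. The underlying Fubini identity holds
   on boxes and extends to all Borel sets by Dynkin's pi-lambda theorem. *)

Set Implicit Arguments.
Unset Strict Implicit.
Unset Printing Implicit Defensive.

Section uniform01.
Context (R : realType).

Definition uniform01 : probability (measurableTypeR R) R := uniform_prob (@ltr01 R).

Lemma uniform01E (B : set R) : measurable B ->
  uniform01 B = lebesgue_measure (B `&` `[0%R, 1%R]).
Proof.
move=> mB; rewrite /= /uniform_prob integral_uniform_pdf.
rewrite (eq_integral (fun=> 1%:E)); last first.
  move=> x; rewrite inE => -[_]; rewrite /= in_itv /= /uniform_pdf => ->.
  by rewrite subr0 invr1.
by rewrite integral_cst ?mul1e //; exact: measurableI.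
Qed.

End uniform01.

Section borel_cV.
Context (R : realType).

Lemma borel_cV_setI n (X Y : set 'cV[R]_n) :
  borel_cV X -> borel_cV Y -> borel_cV (X `&` Y).
Proof.
by have /sigma_algebraP[//|_ _ _] := smallest_sigma_algebra setT (@coord_cylinders R n); apply.
Qed.

Lemma borel_cV_preimage m n (h : 'cV[R]_m -> 'cV[R]_n) (A : set 'cV[R]_n) :
  (forall S, coord_cylinders S -> borel_cV (h @^-1` S)) ->
  borel_cV A -> borel_cV (h @^-1` A).
Proof.
move=> hcyl; rewrite -[h @^-1` A]setTI; move: A; apply: smallest_sub.
  exact/sigma_algebra_image/smallest_sigma_algebra.
by move=> S /hcyl; rewrite /image_set_system setTI.
Qed.

End borel_cV.

Lemma measurable_preimage_box (dT : measure_display) (T : measurableType dT)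
    (R : realType) (k : nat) (V : 'I_k -> T -> R) (B : 'I_k -> set R) :
  (forall j, measurable_fun setT (V j)) -> (forall j, measurable (B j)) ->
  measurable [set t | forall j, B j (V j t)].
Proof.
move=> mV mB.
have -> : [set t | forall j, B j (V j t)] = \bigcap_(j in setT) (V j @^-1` B j).
  by apply/seteqP; split => t /= h j; [move=> _|]; exact: h.
apply: fin_bigcap_measurable; first exact: finite_finset.
by move=> j _; rewrite -[_ @^-1` _]setTI; exact: mV.
Qed.

Section disintegration.
Context (R : realType) (dT : measure_display) (T : measurableType dT)
  (P : probability T R) (k : nat) (U : 'I_k -> T -> R).
Hypothesis measurable_U : forall j, measurable_fun setT (U j).
Hypothesis uniform_U : forall j (B : set R), measurable B ->
  P (U j @^-1` B) = lebesgue_measure (B `&` `[0%R, 1%R]).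
Hypothesis independent_U : forall B : 'I_k -> set R, (forall j, measurable (B j)) ->
  P [set t | forall j, B j (U j t)] = (\prod_j P (U j @^-1` B j))%E.
Variables (E : set T) (c : 'I_k).
Hypothesis measurable_E : measurable E.
Hypothesis E_indep_U : forall B : 'I_k -> set R, (forall j, measurable (B j)) ->
  P (E `&` [set t | forall j, B j (U j t)])
  = (P E * P [set t | forall j, B j (U j t)])%E.

Definition col_rv t : 'cV[R]_k := \col_j U j t.

Definition col_rv_at (x : R) t : 'cV[R]_k := \col_j (if j == c then x else U j t).

Definition section_prob (S : set 'cV[R]_k) (x : R) : \bar R := P (col_rv_at x @^-1` S).

(* Fubini along coordinate [c]: [U c] is uniform and independent of [E] and of
   the other coordinates of [U]. *)
Definition disintegrates (S : set 'cV[R]_k) : Prop :=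
  [/\ measurable (col_rv @^-1` S), (forall x, measurable (col_rv_at x @^-1` S)),
      measurable_fun setT (section_prob S) &
      P (E `&` col_rv @^-1` S) = (P E * \int[uniform01 R]_x section_prob S x)%E].

Definition box (B : 'I_k -> set R) : set 'cV[R]_k := [set u | forall j, B j (u j ord0)].

Definition boxes : set (set 'cV[R]_k) :=
  [set box B | B in [set B | forall j, measurable (B j)]].

Definition free_coord (B : 'I_k -> set R) j : set R := if j == c then setT else B j.

Lemma boxes_setI_closed : setI_closed boxes.
Proof.
move=> _ _ [B1 mB1 <-] [B2 mB2 <-]; exists (fun j => B1 j `&` B2 j).
  by move=> j; exact: measurableI.
by apply/seteqP; split => u /=; [move=> h; split => j; case: (h j)|move=> [h1 h2] j; split].
Qed.

Lemma preimage_col_rv_box B : col_rv @^-1` box B = [set t | forall j, B j (U j t)].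
Proof. by apply/seteqP; split => t /= h j; move: (h j); rewrite mxE. Qed.

Lemma preimage_col_rv_at_box x B :
  col_rv_at x @^-1` box B = [set t | forall j, B j (if j == c then x else U j t)].
Proof. by apply/seteqP; split => t /= h j; move: (h j); rewrite mxE. Qed.

Lemma section_prob_box B x :
  section_prob (box B) x = (P (col_rv @^-1` box (free_coord B)) * (\1_(B c) x)%:E)%E.
Proof.
rewrite /section_prob preimage_col_rv_at_box preimage_col_rv_box indicE.
have [xB|xB] := boolP (x \in B c).
  rewrite mule1; congr (P _); apply/seteqP; split => t /= h j; move: (h j);
    by rewrite /free_coord; case: eqP => // -> _; move: xB; rewrite inE.
rewrite mule0 (_ : [set t | _] = set0) ?measure0 //; apply/seteqP; split => t //=.
by move=> /(_ c); rewrite eqxx => /mem_set; rewrite (negbTE xB).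
Qed.

Lemma prob_box B : (forall j, measurable (B j)) ->
  P (col_rv @^-1` box B) = (P (col_rv @^-1` box (free_coord B)) * uniform01 R (B c))%E.
Proof.
move=> mB; have mfB j : measurable (free_coord B j) by rewrite /free_coord; case: eqP.
rewrite !preimage_col_rv_box !independent_U // uniform01E // -(uniform_U c) //.
rewrite (bigD1 c) //= [X in _ = (X * _)%E](bigD1 c) //= /free_coord eqxx.
rewrite preimage_setT probability_setT mul1e muleC; congr (_ * _)%E.
by apply: eq_bigr => j /negbTE ->.
Qed.

Lemma box_disintegrates : boxes `<=` disintegrates.
Proof.
move=> _ [B mB <-].
have mfB j : measurable (free_coord B j) by rewrite /free_coord; case: eqP.
have mBc : measurable_fun setT (fun x => (\1_(B c) x)%:E : \bar R).
  exact/measurable_EFinP/measurable_indic.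
split.
- by rewrite preimage_col_rv_box; exact: measurable_preimage_box.
- move=> x; rewrite preimage_col_rv_at_box; apply: measurable_preimage_box => // j.
  by case: (j == c) => //; exact: measurable_cst.
- rewrite (funext (section_prob_box B)); exact: measurable_funeM.
rewrite (funext (section_prob_box B)) ge0_integralZl //.
rewrite (integral_indic (uniform01 R) measurableT (mB c)) setIT -prob_box //.
by rewrite preimage_col_rv_box E_indep_U.
Qed.

Lemma disintegrates_setSD : setSD_closed disintegrates.
Proof.
move=> A B BA [mA mAx mfA hA] [mB mBx mfB hB].
have preimageD (V : T -> 'cV[R]_k) : V @^-1` (A `\` B) = V @^-1` A `\` V @^-1` B.
  by rewrite setDE preimage_setI preimage_setC.
have splitA (V : T -> 'cV[R]_k) (F : set T) : measurable F ->
    measurable (V @^-1` A) -> measurable (V @^-1` B) ->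
    P (F `&` V @^-1` A) = (P (F `&` V @^-1` (A `\` B)) + P (F `&` V @^-1` B))%E.
  move=> mF mVA mVB; rewrite (measureDI P (measurableI _ _ mF mVA) mVB).
  rewrite preimageD setIDA -setIA (setIidr (preimage_subset BA)).
  by congr (P _ + P _)%E; rewrite setDE setIAC.
have section_probD x :
    section_prob (A `\` B) x = (section_prob A x - section_prob B x)%E.
  rewrite /section_prob -[in RHS](setTI (_ @^-1` A)) -[in RHS](setTI (_ @^-1` B)).
  by rewrite (splitA _ _ measurableT) // addeK ?setTI // fin_num_measure.
have mfD : measurable_fun setT (section_prob (A `\` B)).
  by rewrite (funext section_probD); exact: emeasurable_funB.
split => //.
- by rewrite preimageD; exact: measurableD.
- by move=> x; rewrite preimageD; exact: measurableD.
have intA : (\int[uniform01 R]_x section_prob A x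
    = \int[uniform01 R]_x section_prob (A `\` B) x + \int[uniform01 R]_x section_prob B x)%E.
  rewrite -ge0_integralD //; apply: eq_integral => x _.
  by rewrite section_probD subeK // fin_num_measure.
have finB : (P E * \int[uniform01 R]_x section_prob B x)%E \is a fin_num.
  by rewrite -hB fin_num_measure //; exact: measurableI.
have := splitA _ _ measurable_E mA mB.
rewrite hA hB intA ge0_muleDr ?integral_ge0 //.
by move/(congr1 (fun z => z - P E * \int[uniform01 R]_x section_prob B x)%E); rewrite !addeK.
Qed.

Lemma disintegrates_ndseq : ndseq_closed disintegrates.
Proof.
move=> F ndF DF.
have mF n : measurable (col_rv @^-1` F n) by case: (DF n).
have mFx n x : measurable (col_rv_at x @^-1` F n) by case: (DF n).
have mfF n : measurable_fun setT (section_prob (F n)) by case: (DF n).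
have hF n : P (E `&` col_rv @^-1` F n) = (P E * \int[uniform01 R]_x section_prob (F n) x)%E.
  by case: (DF n).
have nd_preimage (V : T -> 'cV[R]_k) : nondecreasing_seq (fun n => V @^-1` F n).
  by move=> n m /ndF/subsetPset FnFm; apply/subsetPset => t /FnFm.
have ndE : nondecreasing_seq (fun n => E `&` col_rv @^-1` F n).
  by move=> n m /(nd_preimage col_rv)/subsetPset FnFm; apply/subsetPset; exact: setIS.
have section_cvg x :
    section_prob (F n) x @[n --> \oo] --> section_prob (\bigcup_n F n) x.
  rewrite /section_prob preimage_bigcup.
  exact: (nondecreasing_cvg_mu (mFx ^~ x) (bigcupT_measurable _ (mFx ^~ x)) (nd_preimage _)).
have mfU : measurable_fun setT (section_prob (\bigcup_n F n)).
  by apply: (emeasurable_fun_cvg _ _ mfF) => x _; exact: section_cvg.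
split => //.
- by rewrite preimage_bigcup; exact: bigcupT_measurable.
- by move=> x; rewrite preimage_bigcup; exact: bigcupT_measurable.
have lhs_cvg : P (E `&` col_rv @^-1` F n) @[n --> \oo] -->
    P (E `&` col_rv @^-1` \bigcup_n F n).
  rewrite preimage_bigcup setI_bigcupr; apply: nondecreasing_cvg_mu ndE.
    by move=> n; exact: measurableI.
  by apply: bigcupT_measurable => n; exact: measurableI.
have int_cvg : (\int[uniform01 R]_x section_prob (F n) x)%E @[n --> \oo] -->
    (\int[uniform01 R]_x section_prob (\bigcup_n F n) x)%E.
  have -> : section_prob (\bigcup_n F n) = fun x => limn (fun n => section_prob (F n) x).
    by apply/funext => x; apply/esym/cvg_lim => //; exact: section_cvg.
  apply: cvg_monotone_convergence => // x _ n m nm.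
  by apply: le_measure; rewrite ?inE //; apply/subsetPset; exact: nd_preimage.
move: lhs_cvg; rewrite (funext hF) => /cvg_unique; apply => //.
exact: cvgeZl (fin_num_measure _ _ measurable_E) int_cvg.
Qed.

Lemma coord_cylinders_boxes : @coord_cylinders R k `<=` boxes.
Proof.
move=> _ [i [B [mB ->]]]; exists (fun j => if j == i then B else setT).
  by move=> j; case: eqP.
apply/seteqP; split => u /=; first by move=> /(_ i); rewrite eqxx.
by move=> h j; case: eqP => // ->.
Qed.

Lemma borel_disintegrates S : borel_cV S -> disintegrates S.
Proof.
have boxT : boxes setT.
  by exists (fun=> setT) => //; apply/seteqP; split.
move=> /(sub_sigma_algebra2 coord_cylinders_boxes).
apply: lambda_system_subset => //.
- exact: boxes_setI_closed.
- split=> //; first exact: box_disintegrates.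
  + exact: disintegrates_setSD.
  + exact: disintegrates_ndseq.
- exact: box_disintegrates.
Qed.

End disintegration.

Section select_mx.
Context (R : realType) (d k : nat).

Definition select_mx (f : {ffun 'I_d -> 'I_k}) : 'M[R]_(d, k) :=
  \matrix_(r, j) (f r == j)%:R.

Lemma mul_select_mx f (u : 'cV[R]_k) r : (select_mx f *m u) r ord0 = u (f r) ord0.
Proof.
rewrite !mxE (bigD1 (f r)) //= mxE eqxx mul1r big1 ?addr0 //.
by move=> j /negbTE; rewrite mxE eq_sym => ->; rewrite mul0r.
Qed.

Lemma select_mx_inj : injective select_mx.
Proof.
move=> f g /matrixP fg; apply/ffunP => r.
by have := fg r (f r); rewrite !mxE eqxx; case: eqP => // _ /eqP; rewrite oner_eq0.
Qed.

Lemma categorical_select_mx (M : 'M[R]_(d, k)) :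
  categorical_matrix M -> exists f, M = select_mx f.
Proof.
move=> [M01 Msum].
have row1 r : exists j, M r j == 1.
  apply/not_existsP => Mr; have := Msum r; rewrite big1 => [/eqP|j _].
    by rewrite eq_sym oner_eq0.
  by case: (M01 r j) => // /eqP /Mr.
exists [ffun r => xchoose (row1 r)]; apply/matrixP => r j; rewrite !mxE ffunE.
have /eqP Mrx := xchooseP (row1 r).
case: eqP => [<- //|/eqP]; rewrite eq_sym => jx; case: (M01 r j) => // Mrj.
have := Msum r; rewrite (bigD1 (xchoose (row1 r))) //= (bigD1 j) ?jx //=.
rewrite Mrx Mrj; set s := \sum_(_ < _ | _) _.
have : 0 <= s by apply: sumr_ge0 => j' _; case: (M01 r j') => ->.
lra.
Qed.

Lemma borel_cV_preimage_select f (A : set 'cV[R]_d) :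
  borel_cV A -> borel_cV (mulmx (select_mx f) @^-1` A).
Proof.
apply: borel_cV_preimage => _ [r [B [mB ->]]]; apply: sub_sigma_algebra.
by exists (f r), B; split => //; apply/seteqP; split => u /=; rewrite mul_select_mx.
Qed.

End select_mx.
Arguments select_mx {R d k} f.

Section categorical_times_uniform.
Context (R : realType) (dT : measure_display) (T : measurableType dT)
  (P : probability T R) (d k : nat) (Gamma : T -> 'M[R]_(d, k)) (U : 'I_k -> T -> R).
Hypothesis categorical_Gamma : forall t, categorical_matrix (Gamma t).
Hypothesis measurable_Gamma : forall M, measurable (Gamma @^-1` [set M]).
Hypothesis measurable_U : forall j, measurable_fun setT (U j).
Hypothesis uniform_U : forall j (B : set R), measurable B ->
  P (U j @^-1` B) = lebesgue_measure (B `&` `[0%R, 1%R]).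
Hypothesis independent_U : forall B : 'I_k -> set R, (forall j, measurable (B j)) ->
  P [set t | forall j, B j (U j t)] = (\prod_j P (U j @^-1` B j))%E.
Hypothesis Gamma_indep_U : forall M (B : 'I_k -> set R), (forall j, measurable (B j)) ->
  P (Gamma @^-1` [set M] `&` [set t | forall j, B j (U j t)])
  = (P (Gamma @^-1` [set M]) * P [set t | forall j, B j (U j t)])%E.

Definition select_event (f : {ffun 'I_d -> 'I_k}) : set T := Gamma @^-1` [set select_mx f].

Lemma select_events_trivIset : trivIset setT select_event.
Proof.
move=> f g _ _ [t [/= Gf Gg]].
by apply: (@select_mx_inj R); rewrite -Gf -Gg.
Qed.

Lemma bigcup_select_eventsI (A : set T) :
  \bigcup_(f in setT) (select_event f `&` A) = A.
Proof.
apply/seteqP; split => [t [f _ []] //|t At].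
by have [f Gf] := categorical_select_mx (categorical_Gamma t); exists f.
Qed.

Lemma measure_select_partition (A : set T) :
  (forall f, measurable (select_event f `&` A)) ->
  P A = (\sum_f P (select_event f `&` A))%E.
Proof.
move=> mA; rewrite -{1}(bigcup_select_eventsI A) measure_fin_bigcup //.
- rewrite (fsbigE (index_enum _)) ?index_enum_uniq //.
    by apply: eq_bigl => f; rewrite in_setT.
  by move=> f _; rewrite mem_index_enum.
- exact: finite_finset.
- exact: trivIset_setIr select_events_trivIset.
Qed.

Lemma sum_prob_select_events : (\sum_f P (select_event f))%E = 1%E.
Proof.
rewrite -(probability_setT P) (measure_select_partition (A := setT)) => [|f].
  by apply: eq_bigr => f _; rewrite setIT.
by rewrite setIT; exact: measurable_Gamma.
Qed.

Lemma prob_select_event_U f j (B : set R) : measurable B ->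
  P (select_event f `&` U j @^-1` B) = (P (select_event f) * uniform01 R B)%E.
Proof.
move=> mB; pose Bj j' := if j' == j then B else setT.
have mBj j' : measurable (Bj j') by rewrite /Bj; case: eqP.
have UjE : U j @^-1` B = [set t | forall j', Bj j' (U j' t)].
  apply/seteqP; split => t /=; last by move=> /(_ j); rewrite /Bj eqxx.
  by move=> Bt j'; rewrite /Bj; case: eqP => // ->.
by rewrite UjE Gamma_indep_U // -UjE uniform_U // uniform01E.
Qed.

Local Notation X := (fun t => Gamma t *m \col_j U j t).

Lemma select_event_X f t : select_event f t -> X t = select_mx f *m col_rv U t.
Proof. by rewrite /select_event /= => ->. Qed.

Lemma select_event_Xi f i (B : set R) :
  select_event f `&` (fun t => X t i ord0) @^-1` B = select_event f `&` U (f i) @^-1` B.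
Proof.
by apply/seteqP; split => t [Gf]; rewrite /= (select_event_X Gf) mul_select_mx mxE.
Qed.

Lemma measurable_Xi i : measurable_fun setT ((fun t => X t i ord0) : T -> measurableTypeR R).
Proof.
move=> _ B mB; rewrite setTI -(bigcup_select_eventsI (_ @^-1` B)).
apply: fin_bigcup_measurable => [|f _]; first exact: finite_finset.
rewrite select_event_Xi; apply: measurableI; first exact: measurable_Gamma.
by rewrite -[_ @^-1` _]setTI; exact: measurable_U.
Qed.

Lemma uniform_Xi i (B : set R) : measurable B ->
  P ((fun t => X t i ord0) @^-1` B) = uniform01 R B.
Proof.
move=> mB; have mXiB : measurable ((fun t => X t i ord0) @^-1` B).
  by rewrite -[_ @^-1` _]setTI; exact: measurable_Xi.
rewrite measure_select_partition => [|f]; last exact: measurableI (measurable_Gamma _) mXiB.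
under eq_bigr => f _ do rewrite select_event_Xi prob_select_event_U //.
by rewrite -ge0_sume_distrl ?sum_prob_select_events ?mul1e // => f _; exact: measure_ge0.
Qed.

Section regression.
Variables (i : 'I_d) (A : set 'cV[R]_d).
Hypotheses (borel_A : borel_cV A) (increasing_A : increasing_set A).

Lemma select_event_disintegrates f S :
  borel_cV S -> disintegrates P U (select_event f) (f i) S.
Proof.
exact: (borel_disintegrates measurable_U uniform_U independent_U (f i)
  (measurable_Gamma _) (Gamma_indep_U (select_mx f))).
Qed.

Definition select_cond_prob (f : {ffun 'I_d -> 'I_k}) (x : R) : R :=
  fine (section_prob P U (f i) (mulmx (select_mx f) @^-1` A) x).

Definition cond_prob (x : R) : R := \sum_f fine (P (select_event f)) * select_cond_prob f x.

Lemma select_cond_prob_nd f : {homo select_cond_prob f : x y / x <= y}.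
Proof.
have [_ mA _ _] := select_event_disintegrates f (borel_cV_preimage_select f borel_A).
move=> x y xy; apply: fine_le; rewrite ?fin_num_measure //.
apply: le_measure; rewrite ?inE // => t /= /increasing_A; apply => r.
by rewrite !mul_select_mx !mxE; case: eqP.
Qed.

Lemma select_cond_prob_ge0 f x : 0 <= select_cond_prob f x.
Proof. exact/fine_ge0/measure_ge0. Qed.

Lemma cond_prob_nd : {homo cond_prob : x y / x <= y}.
Proof.
move=> x y xy; apply: ler_sum => f _; rewrite ler_wpM2l ?select_cond_prob_nd //.
exact/fine_ge0/measure_ge0.
Qed.

Lemma cond_prob_ge0 x : 0 <= cond_prob x.
Proof.
apply: sumr_ge0 => f _; rewrite mulr_ge0 ?select_cond_prob_ge0 //.
exact/fine_ge0/measure_ge0.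
Qed.

Lemma joint_prob_select_sum (B : set R) : measurable B ->
  P (X @^-1` A `&` (fun t => X t i ord0) @^-1` B)
  = (\sum_f P (select_event f) * \int[uniform01 R]_(x in B) (select_cond_prob f x)%:E)%E.
Proof.
move=> mB.
pose S (f : {ffun 'I_d -> 'I_k}) := mulmx (select_mx f) @^-1` (A `&` [set x | B (x i ord0)]).
have borel_S f : borel_cV (S f).
  apply: borel_cV_preimage_select; apply: borel_cV_setI => //.
  by apply: sub_sigma_algebra; exists i, B.
have SE f : select_event f `&` (X @^-1` A `&` (fun t => X t i ord0) @^-1` B)
    = select_event f `&` col_rv U @^-1` S f.
  by apply/seteqP; split => t [Gf]; rewrite /= (select_event_X Gf).
rewrite measure_select_partition => [|f]; last first.
  have [mS _ _ _] := select_event_disintegrates f (borel_S f).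
  by rewrite SE; exact: measurableI (measurable_Gamma _) mS.
apply: eq_bigr => f _; rewrite SE.
have [_ _ _ ->] := select_event_disintegrates f (borel_S f).
have [_ mA _ _] := select_event_disintegrates f (borel_cV_preimage_select f borel_A).
congr (_ * _)%E; rewrite [RHS]integral_mkcond; apply: eq_integral => x _.
have Xi_at t : (select_mx f *m col_rv_at U (f i) x t) i ord0 = x.
  by rewrite mul_select_mx mxE eqxx.
rewrite patchE /select_cond_prob fineK ?fin_num_measure // /section_prob /S.
case: ifPn => xB.
  congr (P _); apply/seteqP; split => t /=; first by case.
  by move=> At; split; rewrite //= Xi_at; exact: set_mem.
rewrite (_ : _ @^-1` _ = set0) ?measure0 //.
by apply/seteqP; split => t // [_] /=; rewrite Xi_at => /mem_set; exact/negP.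
Qed.

Lemma integral_cond_prob (B : set R) : measurable B ->
  (\int[P]_(t in (fun t => X t i ord0) @^-1` B) (cond_prob (X t i ord0))%:E)%E
  = (\sum_f P (select_event f) * \int[uniform01 R]_(x in B) (select_cond_prob f x)%:E)%E.
Proof.
move=> mB.
have mcond_prob : measurable_fun B (fun x : measurableTypeR R => (cond_prob x)%:E).
  by apply/measurable_EFinP; exact: nondecreasing_measurable mB cond_prob_nd.
have mcond f : measurable_fun B (fun x : measurableTypeR R => (select_cond_prob f x)%:E).
  by apply/measurable_EFinP; exact: nondecreasing_measurable mB (select_cond_prob_nd f).
rewrite -(ge0_integral_pushforward (measurable_Xi i) P mB mcond_prob); last first.
  by move=> x _; rewrite lee_fin cond_prob_ge0.
rewrite (eq_measure_integral (uniform01 R)) => [||mXi C mC _]; last 2 first.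
- exact: measurable_Xi.
- exact: uniform_Xi.
have cond_probE x :
    (cond_prob x)%:E = (\sum_f P (select_event f) * (select_cond_prob f x)%:E)%E.
  rewrite -sumEFin; apply: eq_bigr => f _.
  by rewrite EFinM fineK // fin_num_measure //; exact: measurable_Gamma.
under eq_integral => x _ do rewrite cond_probE.
rewrite ge0_integral_sum //.
- apply: eq_bigr => f _; rewrite ge0_integralZl //; first exact: mcond.
  by move=> x _; rewrite lee_fin select_cond_prob_ge0.
- by move=> f; exact: measurable_funeM (mcond f).
- by move=> f x _; rewrite mule_ge0 // lee_fin select_cond_prob_ge0.
Qed.

End regression.

End categorical_times_uniform.

Theorem proposition9 (R : realType) (dT : measure_display)
    (T : measurableType dT) (P : probability T R) (d k : nat)
    (Gamma : T -> 'M[R]_(d, k)) (U : 'I_k -> T -> R)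
    (* Gamma is a categorical random matrix *)
    (HGcat : forall t, categorical_matrix (Gamma t))
    (HGmeas : forall M : 'M[R]_(d, k), measurable (Gamma @^-1` [set M]))
    (* U_1, ..., U_k are random variables ... *)
    (HUmeas : forall j, measurable_fun setT (U j))
    (* ... each standard uniform on [0,1] ... *)
    (HUunif : forall j (B : set R), measurable B ->
        P (U j @^-1` B) = lebesgue_measure (B `&` `[0%R, 1%R]))
    (* ... mutually independent ... *)
    (HUindep : forall B : 'I_k -> set R, (forall j, measurable (B j)) ->
        P [set t | forall j, B j (U j t)] = (\prod_j P (U j @^-1` B j))%E)
    (* ... and the vector U is independent of Gamma *)
    (HGUindep : forall (M : 'M[R]_(d, k)) (B : 'I_k -> set R),
        (forall j, measurable (B j)) ->
        P (Gamma @^-1` [set M] `&` [set t | forall j, B j (U j t)])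
        = (P (Gamma @^-1` [set M]) * P [set t | forall j, B j (U j t)])%E) :
  PRD P (fun t => Gamma t *m \col_j U j t).
Proof.
move=> i A borelA incA; exists (cond_prob P Gamma U i A); split.
- exact: cond_prob_nd.
- by apply: nondecreasing_measurable => //; exact: cond_prob_nd.
- by move=> B mB; rewrite joint_prob_select_sum // integral_cond_prob.
Qed.
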